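(* Let $\mathrm F\colon\mathcal A\rightleftarrows\mathcal B\colon\mathrm U$ be an adjunction (unit $\eta$, counit $\varepsilon$), $\mathbb T=(\mathrm{FU},\mathrm F\eta\mathrm U,\varepsilon)$ the induced comonad on $\mathcal B$, $\mathbb C$ a comonad on $\mathcal A$, and $\mathbb S$ a comonad on $\mathcal B$ lifting $\mathbb C$ through $\mathrm F\dashv\mathrm U$ via a natural isomorphism $\Omega\colon\mathrm{CU}\Rightarrow\mathrm{US}$ such that $(\mathrm U,\Omega)$ is a lax morphism of comonads from $\mathbb C$ to $\mathbb S$; let $\Lambda=\varepsilon\mathrm{SF}\circ\mathrm F\Omega\mathrm F\circ\mathrm{FC}\eta\colon\mathrm{FC}\Rightarrow\mathrm{SF}$ be its mate and $\chi=\Lambda\mathrm U\circ\mathrm F\Omega^{-1}\colon\mathrm{TS}\Rightarrow\mathrm{ST}$ the induced distributive law of $\mathbb T$ over $\mathbb S$. Assume further: $\mathrm V\colon\mathcal C\rightleftarrows\mathcal B\colon\mathrm G$ is an adjunction (unit $\eta'$, counit $\varepsilon'$) with $\mathrm S=\mathrm{VG}$, $\Delta^{\mathbb S}=\mathrm V\eta'\mathrm G$, $\varepsilon^{\mathbb S}=\varepsilon'$; $\mathbb Q$ is a comonad on $\mathcal C$ with a natural isomorphism $\tilde\Omega\colon\mathrm{QG}\Rightarrow\mathrm{GT}$ such that $(\mathrm G,\tilde\Omega)$ is a lax isomorphism of comonads from $\mathbb Q$ to $\mathbb T$; and the mate $\tilde\Lambda=\varepsilon'\mathrm{TV}\circ\mathrm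 V\tilde\Omega\mathrm V\circ\mathrm{VQ}\eta'\colon\mathrm{VQ}\Rightarrow\mathrm{TV}$ is invertible (so $(\mathrm V,\tilde\Lambda)$ is a colax isomorphism of comonads from $\mathbb Q$ to $\mathbb T$). Let $\psi=\tilde\Lambda\mathrm G\circ\mathrm V\tilde\Omega^{-1}\colon\mathrm{ST}\Rightarrow\mathrm{TS}$. If $\chi=\psi^{-1}$, then for every category $\mathcal Z$ and functor $\mathrm N\colon\mathcal B\to\mathcal Z$, the left $\chi$-coalgebra structures on $\mathrm N$ are in bijective correspondence with the $\mathbb Q$-opcoalgebra structures on $\mathrm{NV}$.
   Context: Juxtaposition denotes composition of functors and whiskering; $\circ$ is vertical composition. Comonads $(\mathrm D,\Delta^{\mathbb D},\varepsilon^{\mathbb D})$ are coassociative and counital. A lax morphism of comonads from $\mathbb C'$ (on $\mathcal C'$) to $\mathbb D$ (on $\mathcal D$) is $(\mathrm G,\sigma)$, $\mathrm G\colon\mathcal D\to\mathcal C'$, $\sigma\colon\mathrm C'\mathrm G\Rightarrow\mathrm{GD}$ with $\mathrm G\Delta^{\mathbb D}\circ\sigma=\sigma\mathrm D\circ\mathrm C'\sigma\circ\Delta^{\mathbb C'}\mathrm G$ and $\mathrm G\varepsilon^{\mathbb D}\circ\sigma=\varepsilon^{\mathbb C'}\mathrm G$; a colax morphism is $(\mathrm F,\tau)$, $\mathrm F\colon\mathcal C'\to\mathcal D$, $\tau\colon\mathrm F\mathrm C'\Rightarrow\mathrm{DF}$ with $\Delta^{\mathbb D}\mathrm F\circ\tau=\mathrm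 D\tau\circ\tau\mathrm C'\circ\mathrm F\Delta^{\mathbb C'}$ and $\varepsilon^{\mathbb D}\mathrm F\circ\tau=\mathrm F\varepsilon^{\mathbb C'}$; ''isomorphism'' means the transformation is invertible. A left $\chi$-coalgebra structure on $\mathrm N\colon\mathcal B\to\mathcal Z$ (for $\chi\colon\mathrm{TS}\Rightarrow\mathrm{ST}$) is $\lambda\colon\mathrm{NS}\Rightarrow\mathrm{NT}$ with $\mathrm N\Delta^{\mathbb T}\circ\lambda=\lambda\mathrm T\circ\mathrm N\chi\circ\lambda\mathrm S\circ\mathrm N\Delta^{\mathbb S}$ and $\mathrm N\varepsilon^{\mathbb T}\circ\lambda=\mathrm N\varepsilon^{\mathbb S}$. A $\mathbb Q$-opcoalgebra structure on $\mathrm P\colon\mathcal C\to\mathcal Z$ is $\nabla\colon\mathrm P\Rightarrow\mathrm{PQ}$ with $\mathrm P\Delta^{\mathbb Q}\circ\nabla=\nabla\mathrm Q\circ\nabla$ and $\mathrm P\varepsilon^{\mathbb Q}\circ\nabla=\mathrm{id}_{\mathrm P}$. *)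

Set Implicit Arguments.
Unset Strict Implicit.

Record Category := {
  ob :> Type;
  hom : ob -> ob -> Type;
  cmp : forall a b c : ob, hom b c -> hom a b -> hom a c;
  idn : forall a : ob, hom a a;
  cmp_idl : forall a b (f : hom a b), cmp (idn b) f = f;
  cmp_idr : forall a b (f : hom a b), cmp f (idn a) = f;
  cmp_assoc : forall a b c d (h : hom c d) (g : hom b c) (f : hom a b),
      cmp h (cmp g f) = cmp (cmp h g) f }.
Arguments hom {_} a b.
Arguments cmp {_ a b c} g f.
Arguments idn {_} a.
Notation "g ∘ f" := (cmp g f) (at level 40, left associativity).

Record Functor (A B : Category) := {
  fobj :> A -> B;
  fmap : forall a b : A, hom a b -> hom (fobj a) (fobj b);
  fmap_id : forall a, fmap (idn a) = idn (fobj a);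
  fmap_cmp : forall a b c (g : hom b c) (f : hom a b),
      fmap (g ∘ f) = fmap g ∘ fmap f }.
Arguments fmap {A B} f {a b} _ : rename.

Definition idF (A : Category) : Functor A A :=
  {| fobj := fun a => a; fmap := fun a b f => f;
     fmap_id := fun a => eq_refl; fmap_cmp := fun _ _ _ _ _ => eq_refl |}.

Definition fcomp (A B C : Category) (G : Functor B C) (F : Functor A B)
  : Functor A C.
Proof.
  refine {| fobj := fun a => G (F a);
            fmap := fun a b f => fmap G (fmap F f) |}.
  - intros a. rewrite !fmap_id. reflexivity.
  - intros a b c g f. rewrite !fmap_cmp. reflexivity.
Defined.

Record NatTrans (A B : Category) (F G : Functor A B) := {
  tr :> forall a : A, hom (F a) (G a);
  natural : forall a b (f : hom a b), tr b ∘ fmap F f = fmap G f ∘ tr a }.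

Record Adjunction (A B : Category) (F : Functor A B) (U : Functor B A) := {
  adj_unit : NatTrans (idF A) (fcomp U F);
  adj_counit : NatTrans (fcomp F U) (idF B);
  tri_l : forall a : A, adj_counit (F a) ∘ fmap F (adj_unit a) = idn (F a);
  tri_r : forall b : B, fmap U (adj_counit b) ∘ adj_unit (U b) = idn (U b) }.

Record ComonadData (A : Category) := {
  cfun :> Functor A A;
  cdelta : NatTrans cfun (fcomp cfun cfun);
  ceps : NatTrans cfun (idF A) }.

Definition is_comonad (A : Category) (D : ComonadData A) : Prop :=
  (forall a : A, fmap D (cdelta D a) ∘ cdelta D a = cdelta D (D a) ∘ cdelta D a)
  /\ (forall a : A, ceps D (D a) ∘ cdelta D a = idn (D a))
  /\ (forall a : A, fmap D (ceps D a) ∘ cdelta D a = idn (D a)).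

Definition induced_delta (A B : Category) (F : Functor A B) (U : Functor B A)
  (adj : Adjunction F U) : NatTrans (fcomp F U) (fcomp (fcomp F U) (fcomp F U)).
Proof.
  refine {| tr := ((fun b => fmap F (adj_unit adj (U b)))
      : forall b, hom (fcomp F U b) (fcomp (fcomp F U) (fcomp F U) b)) |}.
  intros a b f. simpl. rewrite <- !fmap_cmp. f_equal.
  exact (natural (adj_unit adj) (fmap U f)).
Defined.

Definition induced_comonad (A B : Category) (F : Functor A B) (U : Functor B A)
  (adj : Adjunction F U) : ComonadData B :=
  {| cfun := fcomp F U; cdelta := induced_delta adj; ceps := adj_counit adj |}.

Definition lax_morphism (C' D' : Category) (Cm : ComonadData C') (Dm : ComonadData D')
  (G : Functor D' C') (sigma : NatTrans (fcomp Cm G) (fcomp G Dm)) : Prop :=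
  (forall d : D',
     fmap G (cdelta Dm d) ∘ sigma d
     = sigma (Dm d) ∘ fmap Cm (sigma d) ∘ cdelta Cm (G d))
  /\ (forall d : D', fmap G (ceps Dm d) ∘ sigma d = ceps Cm (G d)).

Definition mateL (A B : Category) (F : Functor A B) (U : Functor B A)
  (adj : Adjunction F U) (Cm : ComonadData A) (S : ComonadData B)
  (Om : NatTrans (fcomp Cm U) (fcomp U S)) (a : A) : hom (F (Cm a)) (S (F a)) :=
  adj_counit adj (S (F a)) ∘ fmap F (Om (F a)) ∘ fmap F (fmap Cm (adj_unit adj a)).

Definition distr_law (A B : Category) (F : Functor A B) (U : Functor B A)
  (adj : Adjunction F U) (Cm : ComonadData A) (S : ComonadData B)
  (Om : NatTrans (fcomp Cm U) (fcomp U S))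
  (Ominv : forall b : B, hom (U (S b)) (Cm (U b))) (b : B)
  : hom (F (U (S b))) (S (F (U b))) :=
  mateL adj Om (U b) ∘ fmap F (Ominv b).

Definition left_coalg (B Z : Category) (S T : ComonadData B)
  (chi : forall b : B, hom (T (S b)) (S (T b))) (N : Functor B Z)
  (lam : NatTrans (fcomp N S) (fcomp N T)) : Prop :=
  (forall b : B,
     fmap N (cdelta T b) ∘ lam b
     = lam (T b) ∘ fmap N (chi b) ∘ lam (S b) ∘ fmap N (cdelta S b))
  /\ (forall b : B, fmap N (ceps T b) ∘ lam b = fmap N (ceps S b)).

Definition opcoalg (C Z : Category) (Q : ComonadData C) (P : Functor C Z)
  (nab : NatTrans P (fcomp P Q)) : Prop :=
  (forall c : C, fmap P (cdelta Q c) ∘ nab c = nab (Q c) ∘ nab c)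
  /\ (forall c : C, fmap P (ceps Q c) ∘ nab c = idn (P c)).
Arguments lax_morphism {C' D'} Cm Dm G sigma.
Arguments left_coalg {B Z} S T chi {N} lam.

From Stdlib Require Import FunctionalExtensionality ProofIrrelevance.

(* The adjunction V ⊣ G identifies transformations λ : NVG ⇒ NT with their
   transposes λV ∘ NVη' : NV ⇒ NTV, and composing with the inverse of the mate
   Λ̃ : VQ ≅ TV turns these into transformations ∇ : NV ⇒ NVQ.  Since (G, Ω̃) is
   lax, its mate Λ̃ is colax, so the counit axioms of λ and ∇ correspond.  In
   the coassociativity axiom of λ the law χ occurs; it is eliminated through
   χ ∘ Λ̃G = VΩ̃, which is exactly what χ = ψ⁻¹ provides. *)

Set Implicit Arguments.
Unset Strict Implicit.

Lemma fmap_eq (A B : Category) (F : Functor A B) (a b : A) (f g : hom a b) :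
  f = g -> fmap F f = fmap F g.
Proof. intros ->. reflexivity. Qed.

Lemma fmap_inverse (A B : Category) (F : Functor A B) (a b : A) (i : hom a b)
  (j : hom b a) : j ∘ i = idn a -> fmap F j ∘ fmap F i = idn (F a).
Proof. intros H. rewrite <- fmap_cmp, H. apply fmap_id. Qed.

Lemma split_mono_cancel (C : Category) (a b c : C) (i : hom b c) (j : hom c b)
  (f g : hom a b) : j ∘ i = idn b -> i ∘ f = i ∘ g -> f = g.
Proof.
  intros ji_id Hfg.
  rewrite <- (cmp_idl f), <- (cmp_idl g), <- ji_id, <- !cmp_assoc, Hfg.
  reflexivity.
Qed.

Lemma split_epi_cancel (C : Category) (a b c : C) (i : hom a b) (j : hom b a)
  (f g : hom b c) : i ∘ j = idn b -> f ∘ i = g ∘ i -> f = g.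
Proof.
  intros ij_id Hfg.
  rewrite <- (cmp_idr f), <- (cmp_idr g), <- ij_id, !cmp_assoc, Hfg.
  reflexivity.
Qed.

Lemma natrans_sig_eq (A B : Category) (F G : Functor A B) (P : NatTrans F G -> Prop)
  (x y : {t : NatTrans F G | P t}) :
  (forall a, proj1_sig x a = proj1_sig y a) -> x = y.
Proof.
  destruct x as [[s ns] p], y as [[t nt] q]; simpl; intros H.
  assert (s = t) as <- by (apply functional_extensionality_dep; exact H).
  assert (ns = nt) as <- by apply proof_irrelevance.
  f_equal. apply proof_irrelevance.
Qed.

(* Composites are normalized to right-associated form with functors pushed
   inside.  [rw H] rewrites with an equation between such composites even when
   its left side is only a prefix of a composite in the goal, by first
   extending both sides of [H] by an arbitrary tail [r]. *)
Ltac assoc_norm := simpl;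
  repeat rewrite ?fmap_cmp, ?fmap_id, ?cmp_idl, ?cmp_idr; repeat rewrite <- cmp_assoc.
Ltac assoc_norm_in H := simpl in H;
  repeat rewrite ?fmap_cmp, ?fmap_id, ?cmp_idl, ?cmp_idr in H;
  repeat rewrite <- cmp_assoc in H.

Ltac extend_by L r := lazymatch L with
  | ?x ∘ ?y => let y' := extend_by y r in constr:(x ∘ y')
  | _ => constr:(L ∘ r) end.

Ltac rw H :=
  let H1 := fresh "H" in pose proof H as H1; assoc_norm_in H1; assoc_norm;
  first [
    lazymatch type of H1 with @eq (@hom ?C ?a ?b) ?L ?R =>
      let H2 := fresh "H" in
      assert (H2 : forall (d : ob C) (r : @hom C d a),
                 ltac:(let l := extend_by L r in let rr := extend_by R r in exact (l = rr)))
        by (let d := fresh in let r := fresh in intros d r;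
            repeat rewrite cmp_assoc; repeat rewrite cmp_assoc in H1;
            exact (f_equal (fun t => t ∘ r) H1));
      simpl in H2; rewrite H2; clear H2
    end
  | rewrite H1 ]; clear H1; assoc_norm.

Ltac rwr H := rw (eq_sym H).

Section Mate.

Variables (A B : Category) (F : Functor A B) (U : Functor B A) (adj : Adjunction F U).
Variables (C : ComonadData A) (S : ComonadData B) (Om : NatTrans (fcomp C U) (fcomp U S)).

Local Notation eta := (adj_unit adj).
Local Notation eps := (adj_counit adj).
Local Notation Lam := (mateL adj Om).

Lemma mateL_natural (a a' : A) (h : hom a a') :
  Lam a' ∘ fmap F (fmap C h) = fmap S (fmap F h) ∘ Lam a.
Proof.
  unfold mateL. assoc_norm.
  rw (fmap_eq F (fmap_eq C (natural eta h))).
  rw (fmap_eq F (natural Om (fmap F h))).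
  rw (natural eps (fmap S (fmap F h))). reflexivity.
Qed.

Lemma mateL_unit_transpose (a : A) :
  fmap U (Lam a) ∘ eta (C a) = Om (F a) ∘ fmap C (eta a).
Proof.
  unfold mateL. assoc_norm.
  rwr (natural eta (fmap C (eta a))).
  rwr (natural eta (Om (F a))).
  rw (tri_r adj (S (F a))). reflexivity.
Qed.

Lemma mateL_counit_transpose (b : B) :
  fmap S (eps b) ∘ Lam (U b) = eps (S b) ∘ fmap F (Om b).
Proof.
  unfold mateL. assoc_norm.
  rwr (natural eps (fmap S (eps b))).
  rwr (fmap_eq F (natural Om (eps b))).
  rw (fmap_eq F (fmap_eq C (tri_r adj b))). reflexivity.
Qed.

Hypothesis Om_lax : lax_morphism C S U Om.

Lemma mateL_ceps (a : A) : ceps S (F a) ∘ Lam a = fmap F (ceps C a).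
Proof.
  unfold mateL. assoc_norm.
  rwr (natural eps (ceps S (F a))).
  rw (fmap_eq F (proj2 Om_lax (F a))).
  rw (fmap_eq F (natural (ceps C) (eta a))).
  rw (tri_l adj a). reflexivity.
Qed.

Lemma mateL_cdelta (a : A) :
  cdelta S (F a) ∘ Lam a = fmap S (Lam a) ∘ (Lam (C a) ∘ fmap F (cdelta C a)).
Proof.
  unfold mateL. assoc_norm.
  rwr (natural eps (cdelta S (F a))).
  rw (fmap_eq F (proj1 Om_lax (F a))).
  rw (fmap_eq F (natural (cdelta C) (eta a))).
  rwr (natural eps (fmap S (fmap F (fmap C (eta a))))).
  rwr (natural eps (fmap S (fmap F (Om (F a))))).
  rwr (natural eps (fmap S (eps (S (F a))))).
  rwr (fmap_eq F (natural Om (fmap F (fmap C (eta a))))).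
  rwr (fmap_eq F (natural Om (fmap F (Om (F a))))).
  rwr (fmap_eq F (natural Om (eps (S (F a))))).
  rwr (fmap_eq F (fmap_eq C (natural eta (fmap C (eta a))))).
  rwr (fmap_eq F (fmap_eq C (natural eta (Om (F a))))).
  rw (fmap_eq F (fmap_eq C (tri_r adj (S (F a))))). reflexivity.
Qed.

End Mate.

Section Transfer.

Variables (B Cc : Category) (V : Functor Cc B) (G : Functor B Cc) (adjVG : Adjunction V G).
Variables (T : ComonadData B) (Q : ComonadData Cc).
Variables (Omt : NatTrans (fcomp Q G) (fcomp G T))
  (Omtinv : forall b : B, hom (G (T b)) (Q (G b))).
Hypothesis Omt_lax : lax_morphism Q T G Omt.
Hypothesis Omtinv_Omt : forall b, Omtinv b ∘ Omt b = idn (Q (G b)).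
Hypothesis Omt_Omtinv : forall b, Omt b ∘ Omtinv b = idn (G (T b)).

Local Notation S := (induced_comonad adjVG).
Local Notation eta' := (adj_unit adjVG).
Local Notation eps' := (adj_counit adjVG).
Local Notation L := (mateL adjVG Omt).
Local Notation psi := (distr_law adjVG Omt Omtinv).

Variable Linv : forall c : Cc, hom (T (V c)) (V (Q c)).
Hypothesis Linv_L : forall c, Linv c ∘ L c = idn (V (Q c)).
Hypothesis L_Linv : forall c, L c ∘ Linv c = idn (T (V c)).

Variable chi : forall b : B, hom (T (S b)) (S (T b)).
Hypothesis chi_psi : forall b, chi b ∘ psi b = idn (S (T b)).
Hypothesis psi_chi : forall b, psi b ∘ chi b = idn (T (S b)).

Lemma mateL_inv_natural (c c' : Cc) (h : hom c c') :
  Linv c' ∘ fmap T (fmap V h) = fmap V (fmap Q h) ∘ Linv c.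
Proof.
  apply (split_mono_cancel (Linv_L c')).
  rw (L_Linv c'). rw (mateL_natural adjVG Omt h). rw (L_Linv c). reflexivity.
Qed.

Lemma mateL_inv_ceps (c : Cc) : fmap V (ceps Q c) ∘ Linv c = ceps T (V c).
Proof. rewrite <- (mateL_ceps adjVG Omt_lax). rw (L_Linv c). reflexivity. Qed.

Lemma chi_mateL (b : B) : chi b ∘ L (G b) = fmap V (Omt b).
Proof.
  apply (split_epi_cancel (fmap_inverse V (Omtinv_Omt b))).
  rw (fmap_eq V (Omt_Omtinv b)). exact (chi_psi b).
Qed.

Lemma chi_unit (c : Cc) :
  chi (V c) ∘ fmap T (fmap V (eta' c))
  = fmap V (Omt (V c)) ∘ (fmap V (fmap Q (eta' c)) ∘ Linv c).
Proof.
  apply (split_mono_cancel (chi_psi (V c))).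
  rw (psi_chi (V c)). unfold distr_law.
  rw (fmap_eq V (Omtinv_Omt (V c))). rw (mateL_natural adjVG Omt (eta' c)).
  rw (L_Linv c). reflexivity.
Qed.

Variables (Z : Category) (N : Functor B Z).

Definition left_coalg_of_opcoalg (nab : NatTrans (fcomp N V) (fcomp (fcomp N V) Q))
  : NatTrans (fcomp N S) (fcomp N T).
Proof.
  refine {| tr := (fun b => fmap N (fmap T (eps' b)) ∘ (fmap N (L (G b)) ∘ nab (G b))
                    : hom (fcomp N S b) (fcomp N T b)) |}.
  abstract (intros b b' h; assoc_norm;
    rw (natural nab (fmap G h)); rw (fmap_eq N (mateL_natural adjVG Omt (fmap G h)));
    rw (fmap_eq N (fmap_eq T (natural eps' h))); reflexivity).
Defined.

Definition opcoalg_of_left_coalg (lam : NatTrans (fcomp N S) (fcomp N T))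
  : NatTrans (fcomp N V) (fcomp (fcomp N V) Q).
Proof.
  refine {| tr := (fun c => fmap N (Linv c) ∘ (lam (V c) ∘ fmap N (fmap V (eta' c)))
                    : hom (fcomp N V c) (fcomp (fcomp N V) Q c)) |}.
  abstract (intros c c' h; assoc_norm;
    rw (fmap_eq N (fmap_eq V (natural eta' h))); rw (natural lam (fmap V h));
    rw (fmap_eq N (mateL_inv_natural h)); reflexivity).
Defined.

Lemma left_coalg_of_opcoalgK (lam : NatTrans (fcomp N S) (fcomp N T)) (b : B) :
  left_coalg_of_opcoalg (opcoalg_of_left_coalg lam) b = lam b.
Proof.
  simpl. assoc_norm.
  rw (fmap_eq N (L_Linv (G b))).
  rwr (natural lam (eps' b)).
  rw (fmap_eq N (fmap_eq V (tri_r adjVG b))). reflexivity.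
Qed.

Lemma opcoalg_of_left_coalgK (nab : NatTrans (fcomp N V) (fcomp (fcomp N V) Q)) (c : Cc) :
  opcoalg_of_left_coalg (left_coalg_of_opcoalg nab) c = nab c.
Proof.
  simpl. assoc_norm.
  rw (natural nab (eta' c)).
  rw (fmap_eq N (mateL_natural adjVG Omt (eta' c))).
  rw (fmap_eq N (fmap_eq T (tri_l adjVG c))).
  rw (fmap_eq N (Linv_L c)). reflexivity.
Qed.

Lemma left_coalg_of_opcoalgP (nab : NatTrans (fcomp N V) (fcomp (fcomp N V) Q)) :
  opcoalg nab -> left_coalg S T chi (left_coalg_of_opcoalg nab).
Proof.
  intros [nab_delta nab_eps]. split; intros b; simpl; assoc_norm.
  - rw (fmap_eq N (natural (cdelta T) (eps' b))).
    rw (fmap_eq N (mateL_cdelta adjVG Omt_lax (G b))).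
    rw (nab_delta (G b)).
    rw (natural nab (eta' (G b))).
    rw (fmap_eq N (mateL_natural adjVG Omt (eta' (G b)))).
    rw (fmap_eq N (fmap_eq T (tri_l adjVG (G b)))).
    rw (fmap_eq N (chi_mateL b)).
    rw (natural nab (Omt b)).
    rw (fmap_eq N (mateL_natural adjVG Omt (Omt b))).
    rw (fmap_eq N (fmap_eq T (mateL_counit_transpose adjVG Omt b))).
    reflexivity.
  - rw (fmap_eq N (natural (ceps T) (eps' b))).
    rw (fmap_eq N (mateL_ceps adjVG Omt_lax (G b))).
    rw (nab_eps (G b)). reflexivity.
Qed.

Lemma opcoalg_of_left_coalgP (lam : NatTrans (fcomp N S) (fcomp N T)) :
  left_coalg S T chi lam -> opcoalg (opcoalg_of_left_coalg lam).
Proof.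
  intros [lam_delta lam_eps]. split; intros c; simpl.
  - assert (lam_L :
      lam (T (V c)) ∘ fmap N (fmap V (Omt (V c) ∘ fmap Q (eta' c)))
      = fmap N (fmap T (L c)) ∘ (lam (V (Q c)) ∘ fmap N (fmap V (eta' (Q c))))).
    { rewrite <- (mateL_unit_transpose adjVG Omt c). rw (natural lam (L c)). reflexivity. }
    (* Composing with the iso N(TΛ̃ ∘ Λ̃Q) lets mateL_cdelta turn NVΔ^Q into
       NΔ^T V, where the coassociativity of λ applies. *)
    apply (split_mono_cancel (i := fmap N (fmap T (L c)) ∘ fmap N (L (Q c)))
                             (j := fmap N (Linv (Q c)) ∘ fmap N (fmap T (Linv c)))).
    { rw (fmap_eq N (fmap_eq T (Linv_L c))). rw (fmap_eq N (Linv_L (Q c))). reflexivity. }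
    assoc_norm.
    rwr (fmap_eq N (mateL_cdelta adjVG Omt_lax c)).
    rw (fmap_eq N (L_Linv c)).
    rw (lam_delta (V c)).
    rw (fmap_eq N (fmap_eq V (natural eta' (eta' c)))).
    rw (natural lam (fmap V (eta' c))).
    rw (fmap_eq N (chi_unit c)).
    rw lam_L.
    rw (fmap_eq N (L_Linv (Q c))). reflexivity.
  - assoc_norm.
    rw (fmap_eq N (mateL_inv_ceps c)).
    rw (lam_eps (V c)).
    rw (fmap_eq N (tri_l adjVG c)). reflexivity.
Qed.

Lemma left_coalg_opcoalg_bijection :
  exists (f : {lam : NatTrans (fcomp N S) (fcomp N T) | left_coalg S T chi lam}
              -> {nab : NatTrans (fcomp N V) (fcomp (fcomp N V) Q) | opcoalg nab})
         (g : {nab : NatTrans (fcomp N V) (fcomp (fcomp N V) Q) | opcoalg nab}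
              -> {lam : NatTrans (fcomp N S) (fcomp N T) | left_coalg S T chi lam}),
    (forall x, g (f x) = x) /\ (forall y, f (g y) = y).
Proof.
  exists (fun x => exist _ _ (opcoalg_of_left_coalgP (proj2_sig x))).
  exists (fun y => exist _ _ (left_coalg_of_opcoalgP (proj2_sig y))).
  split; intros x; apply natrans_sig_eq; simpl.
  - apply left_coalg_of_opcoalgK.
  - apply opcoalg_of_left_coalgK.
Qed.

End Transfer.

Theorem corollary3p2
  (A B Cc : Category)
  (F : Functor A B) (U : Functor B A) (adjFU : Adjunction F U)
  (Cm : ComonadData A) (HCm : is_comonad Cm)
  (V : Functor Cc B) (G : Functor B Cc) (adjVG : Adjunction V G)
  (* S := (VG, V eta' G, eps'), T := (FU, F eta U, eps) *)
  (Om : NatTrans (fcomp Cm U) (fcomp U (induced_comonad adjVG)))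
  (Ominv : forall b : B, hom (U (induced_comonad adjVG b)) (Cm (U b)))
  (HOm1 : forall b : B, Ominv b ∘ Om b = idn (Cm (U b)))
  (HOm2 : forall b : B, Om b ∘ Ominv b = idn (U (induced_comonad adjVG b)))
  (HOmlax : lax_morphism Cm (induced_comonad adjVG) U Om)
  (Q : ComonadData Cc) (HQ : is_comonad Q)
  (Omt : NatTrans (fcomp Q G) (fcomp G (induced_comonad adjFU)))
  (Omtinv : forall b : B, hom (G (induced_comonad adjFU b)) (Q (G b)))
  (HOmt1 : forall b : B, Omtinv b ∘ Omt b = idn (Q (G b)))
  (HOmt2 : forall b : B, Omt b ∘ Omtinv b = idn (G (induced_comonad adjFU b)))
  (HOmtlax : lax_morphism Q (induced_comonad adjFU) G Omt)
  (HLt : exists Ltinv : forall c : Cc, hom (induced_comonad adjFU (V c)) (V (Q c)),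
      (forall c : Cc, Ltinv c ∘ mateL adjVG Omt c = idn (V (Q c))) /\
      (forall c : Cc, mateL adjVG Omt c ∘ Ltinv c = idn (induced_comonad adjFU (V c))))
  (Hchi : forall b : B,
      distr_law adjFU Om Ominv b ∘ distr_law adjVG Omt Omtinv b
        = idn (induced_comonad adjVG (induced_comonad adjFU b)) /\
      distr_law adjVG Omt Omtinv b ∘ distr_law adjFU Om Ominv b
        = idn (induced_comonad adjFU (induced_comonad adjVG b))) :
  forall (Z : Category) (N : Functor B Z),
  exists (f : { lam : NatTrans (fcomp N (induced_comonad adjVG))
                               (fcomp N (induced_comonad adjFU))
              | left_coalg (induced_comonad adjVG) (induced_comonad adjFU) (distr_law adjFU Om Ominv) lam }
              -> { nab : NatTrans (fcomp N V) (fcomp (fcomp N V) Q)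
                 | opcoalg nab })
         (g : { nab : NatTrans (fcomp N V) (fcomp (fcomp N V) Q) | opcoalg nab }
              -> { lam : NatTrans (fcomp N (induced_comonad adjVG))
                                  (fcomp N (induced_comonad adjFU))
                 | left_coalg (induced_comonad adjVG) (induced_comonad adjFU) (distr_law adjFU Om Ominv) lam }),
    (forall x, g (f x) = x) /\ (forall y, f (g y) = y).
Proof.
  destruct HLt as [Linv [Linv_L L_Linv]]. intros Z N.
  exact (left_coalg_opcoalg_bijection HOmtlax HOmt1 HOmt2 Linv_L L_Linv
           (fun b => proj1 (Hchi b)) (fun b => proj2 (Hchi b)) N).
Qed.
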